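(* Let $\bm M_1,\bm M_2$ be real matrices of the same dimension with $\|\bm M_1\|_S=\mu$, $\|\bm M_2\|_S=\nu$. Let $\theta=\Theta(\bm M_1,\bm M_2)$ be the smallest principal angle between their column spaces and $\eta=\Theta(\bm M_1',\bm M_2')$ the smallest principal angle between their row spaces. Then $\|\bm M_1+\bm M_2\|_S^2\le\Lambda^2(\mu,\nu,\theta,\eta)$, where $$\Lambda^2(\mu,\nu,\theta,\eta)=\frac12\Big[\sqrt{(\mu^2+\nu^2+2\mu\nu\cos\theta\cos\eta)^2-4\mu^2\nu^2\sin^2\theta\sin^2\eta}+\mu^2+\nu^2+2\mu\nu\cos\theta\cos\eta\Big].$$
   Context: $\|\cdot\|_S$ is the spectral norm. For matrices $\bm M_1,\bm M_2$ with the same number of rows (both nonzero), the smallest principal angle $\Theta(\bm M_1,\bm M_2)\in[0,\pi/2]$ between their column spaces is defined by $\cos\Theta(\bm M_1,\bm M_2)=\sup\frac{u_1'\bm M_1'\bm M_2u_2}{\|\bm M_1u_1\|\,\|\bm M_2u_2\|}$, the supremum over $u_1,u_2$ with $\bm M_1u_1\ne0$, $\bm M_2u_2\ne0$. *)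

From Stdlib Require Import Reals Lra.
Open Scope R_scope.

(* A real m x n matrix is represented by its entry function; only entries
   (i, j) with i < m, j < n are ever used. Vectors likewise: nat -> R. *)
Definition mat := nat -> nat -> R.
Definition vec := nat -> R.

Fixpoint rsum (n : nat) (f : nat -> R) : R :=
  match n with
  | O => 0
  | S k => rsum k f + f k
  end.

Definition mulv (n : nat) (M : mat) (x : vec) : vec :=
  fun i => rsum n (fun j => M i j * x j).

Definition dot (m : nat) (u v : vec) : R := rsum m (fun i => u i * v i).
Definition vnorm (m : nat) (u : vec) : R := sqrt (dot m u u).

Definition trmat (M : mat) : mat := fun i j => M j i.
Definition addmat (M1 M2 : mat) : mat := fun i j => M1 i j + M2 i j.

Definition spec_ratios (m n : nat) (M : mat) : R -> Prop :=
  fun r => exists x : vec, vnorm n x <> 0 /\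
     r = vnorm m (mulv n M x) / vnorm n x.
Definition is_spectral_norm (m n : nat) (M : mat) (s : R) : Prop :=
  is_lub (spec_ratios m n M) s.

(* Smallest principal angle between the column spaces of M1 (m x n1) and
   M2 (m x n2):  theta in [0, pi/2] with
   cos theta = sup u1' M1' M2 u2 / (|M1 u1| |M2 u2|),  M1 u1 <> 0, M2 u2 <> 0.
   (u1' M1' M2 u2 is the inner product of M1 u1 and M2 u2.) *)
Definition angle_ratios (m n1 n2 : nat) (M1 M2 : mat) : R -> Prop :=
  fun r => exists u1 u2 : vec,
     vnorm m (mulv n1 M1 u1) <> 0 /\ vnorm m (mulv n2 M2 u2) <> 0 /\
     r = dot m (mulv n1 M1 u1) (mulv n2 M2 u2)
         / (vnorm m (mulv n1 M1 u1) * vnorm m (mulv n2 M2 u2)).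
Definition is_principal_angle (m n1 n2 : nat) (M1 M2 : mat) (theta : R) : Prop :=
  0 <= theta <= PI / 2 /\ is_lub (angle_ratios m n1 n2 M1 M2) (cos theta).

Definition Lambda2 (mu nu theta eta : R) : R :=
  / 2 * ( sqrt ( (mu ^ 2 + nu ^ 2 + 2 * mu * nu * cos theta * cos eta) ^ 2
                 - 4 * mu ^ 2 * nu ^ 2 * (sin theta) ^ 2 * (sin eta) ^ 2 )
          + (mu ^ 2 + nu ^ 2 + 2 * mu * nu * cos theta * cos eta) ).

(* For a unit vector x put p_i = M_i x, c_i = |p_i| and r_i = M_i' p_i.  The column angle
   gives |(M1 + M2) x|^2 <= c1^2 + c2^2 + 2 cos(theta) c1 c2.  The r_i lie in the row
   spaces, so their normalized Gram matrix [[1, gm], [gm, 1]] has |gm| <= cos(eta); since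
   <r_i, x> = c_i^2 and |r_i| <= mu_i c_i, the point (u, v) = (c1^2/|r1|, c2^2/|r2|) lies in
   the ellipse of that Gram matrix and c_i <= mu_i u_i.  Maximizing the quadratic form
   mu^2 u^2 + nu^2 v^2 + 2 cos(theta) mu nu u v over the ellipse is a 2x2 generalized
   eigenvalue problem whose largest eigenvalue is at most Lambda^2. *)

From Stdlib Require Import Reals Lra Lia Psatz FunctionalExtensionality.
Open Scope R_scope.

Lemma rsum_ext n f g : (forall i, (i < n)%nat -> f i = g i) -> rsum n f = rsum n g.
Proof.
  induction n as [|n IH]; intros H; simpl; [reflexivity|].
  rewrite (H n) by lia. rewrite IH by (intros; apply H; lia). reflexivity.
Qed.

Lemma rsum_plus n f g : rsum n (fun i => f i + g i) = rsum n f + rsum n g.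
Proof. induction n as [|n IH]; simpl; [ring|rewrite IH; ring]. Qed.

Lemma rsum_scal n k f : rsum n (fun i => k * f i) = k * rsum n f.
Proof. induction n as [|n IH]; simpl; [ring|rewrite IH; ring]. Qed.

Lemma rsum_nonneg n f : (forall i, 0 <= f i) -> 0 <= rsum n f.
Proof. intros H; induction n as [|n IH]; simpl; [lra|specialize (H n); lra]. Qed.

Lemma rsum_swap n m f :
  rsum n (fun i => rsum m (fun j => f i j)) = rsum m (fun j => rsum n (fun i => f i j)).
Proof.
  induction n as [|n IH]; simpl.
  - clear. induction m as [|m IH]; simpl; [reflexivity|rewrite <- IH; ring].
  - rewrite IH, <- rsum_plus. reflexivity.
Qed.

Lemma dot_comm m u v : dot m u v = dot m v u.
Proof. apply rsum_ext; intros; ring. Qed.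

Lemma dot_nonneg m u : 0 <= dot m u u.
Proof. apply rsum_nonneg; intros; nra. Qed.

Lemma dot_lin_l m P Q u v w :
  dot m (fun i => P * u i + Q * v i) w = P * dot m u w + Q * dot m v w.
Proof. unfold dot. rewrite <- !rsum_scal, <- rsum_plus. apply rsum_ext; intros; ring. Qed.

Lemma dot_lin_sq m P Q u v :
  dot m (fun i => P * u i + Q * v i) (fun i => P * u i + Q * v i)
  = P ^ 2 * dot m u u + Q ^ 2 * dot m v v + 2 * P * Q * dot m u v.
Proof.
  rewrite dot_lin_l, (dot_comm m u), (dot_comm m v), !dot_lin_l, (dot_comm m v u). ring.
Qed.

Lemma dot_trmat m n M y z : dot n (mulv m (trmat M) y) z = dot m y (mulv n M z).
Proof.
  unfold dot, mulv, trmat.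
  transitivity (rsum n (fun j => rsum m (fun i => M i j * y i * z j))).
  { apply rsum_ext; intros. rewrite Rmult_comm, <- rsum_scal. apply rsum_ext; intros; ring. }
  rewrite rsum_swap. apply rsum_ext; intros. rewrite <- rsum_scal. apply rsum_ext; intros; ring.
Qed.

Lemma Cauchy_Schwarz m u v : (dot m u v) ^ 2 <= dot m u u * dot m v v.
Proof.
  set (A := dot m u u); set (B := dot m u v); set (C := dot m v v).
  assert (Hquad : forall t, 0 <= A + 2 * t * B + t ^ 2 * C).
  { intro t. pose proof (dot_nonneg m (fun i => 1 * u i + t * v i)) as E.
    rewrite dot_lin_sq in E. fold A B C in E. lra. }
  assert (HC : 0 <= C) by apply dot_nonneg.
  destruct (Req_dec C 0) as [C0|C0].
  - destruct (Req_dec B 0) as [B0|B0].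
    + rewrite B0, C0. lra.
    + specialize (Hquad (- (A + 1) / (2 * B))). rewrite C0 in Hquad.
      replace (A + 2 * (- (A + 1) / (2 * B)) * B + (- (A + 1) / (2 * B)) ^ 2 * 0) with (-1)
        in Hquad by (field; auto). lra.
  - specialize (Hquad (- B / C)).
    replace (A + 2 * (- B / C) * B + (- B / C) ^ 2 * C) with ((A * C - B ^ 2) / C)
      in Hquad by (field; auto).
    assert (0 <= (A * C - B ^ 2) / C * C) by (apply Rmult_le_pos; lra).
    replace ((A * C - B ^ 2) / C * C) with (A * C - B ^ 2) in * by (field; auto). lra.
Qed.

Lemma vnorm_nonneg m u : 0 <= vnorm m u.
Proof. apply sqrt_pos. Qed.

Lemma vnorm_sq m u : vnorm m u ^ 2 = dot m u u.
Proof. apply pow2_sqrt, dot_nonneg. Qed.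

Lemma vnorm_scal m k u : vnorm m (fun i => k * u i) = Rabs k * vnorm m u.
Proof.
  unfold vnorm. replace (dot m (fun i => k * u i) (fun i => k * u i)) with (k ^ 2 * dot m u u).
  - rewrite sqrt_mult by (apply pow2_ge_0 || apply dot_nonneg).
    rewrite <- sqrt_Rsqr_abs. unfold Rsqr. do 2 f_equal. ring.
  - unfold dot. rewrite <- rsum_scal. apply rsum_ext; intros; ring.
Qed.

Lemma mulv_scal n M k x : mulv n M (fun j => k * x j) = (fun i => k * mulv n M x i).
Proof.
  apply functional_extensionality; intro i. unfold mulv. rewrite <- rsum_scal.
  apply rsum_ext; intros; ring.
Qed.

Lemma mulv_addmat n M1 M2 x :
  mulv n (addmat M1 M2) x = (fun i => 1 * mulv n M1 x i + 1 * mulv n M2 x i).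
Proof.
  apply functional_extensionality; intro i. unfold mulv, addmat.
  rewrite <- !rsum_scal, <- rsum_plus. apply rsum_ext; intros; ring.
Qed.

Lemma spectral_norm_nonneg m n M mu : is_spectral_norm m n M mu -> 0 <= mu.
Proof.
  intros [Hub Hlub].
  destruct (Rle_dec 0 mu) as [h|h]; [exact h|exfalso].
  assert (mu <= mu - 1); [|lra].
  apply Hlub. intros r [x [Hx Hr]]. exfalso.
  assert (0 <= r).
  { rewrite Hr. pose proof (vnorm_nonneg n x).
    apply Rmult_le_pos; [apply vnorm_nonneg|apply Rlt_le, Rinv_0_lt_compat; lra]. }
  assert (r <= mu) by (apply Hub; exists x; auto). lra.
Qed.

Lemma spectral_norm_bound m n M mu : is_spectral_norm m n M mu ->
  forall z, vnorm m (mulv n M z) <= mu * vnorm n z.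
Proof.
  intros HS z. pose proof (spectral_norm_nonneg _ _ _ _ HS) as Hmu.
  destruct HS as [Hub _].
  pose proof (vnorm_nonneg n z).
  destruct (Req_dec (vnorm n z) 0) as [z0|z0].
  - (* a null vector has null image: |Mz|^2 = <M'Mz, z> <= |M'Mz| |z| = 0 *)
    assert (Hz : dot n z z = 0) by (rewrite <- vnorm_sq, z0; ring).
    pose proof (Cauchy_Schwarz n (mulv m (trmat M) (mulv n M z)) z) as C.
    rewrite Hz, Rmult_0_r, dot_trmat in C.
    assert (E : dot m (mulv n M z) (mulv n M z) = 0) by nra.
    rewrite z0. unfold vnorm. rewrite E, sqrt_0. lra.
  - assert (r : vnorm m (mulv n M z) / vnorm n z <= mu) by (apply Hub; exists z; auto).
    apply Rmult_le_compat_r with (r := vnorm n z) in r; [|lra].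
    replace (vnorm m (mulv n M z) / vnorm n z * vnorm n z) with (vnorm m (mulv n M z))
      in r by (field; auto).
    exact r.
Qed.

Lemma spectral_norm_bound_trmat m n M mu : is_spectral_norm m n M mu ->
  forall y, vnorm n (mulv m (trmat M) y) <= mu * vnorm m y.
Proof.
  intros HS y. pose proof (spectral_norm_nonneg _ _ _ _ HS) as Hmu.
  set (w := mulv m (trmat M) y).
  pose proof (spectral_norm_bound _ _ _ _ HS w) as Hb.
  (* |w|^2 = <y, M w> <= |y| |M w| <= mu |y| |w| *)
  pose proof (Cauchy_Schwarz m y (mulv n M w)) as C.
  rewrite <- dot_trmat in C. fold w in C. rewrite <- !vnorm_sq in C.
  pose proof (vnorm_nonneg n w). pose proof (vnorm_nonneg m y).
  pose proof (vnorm_nonneg m (mulv n M w)).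
  set (W := vnorm n w) in *. set (Y := vnorm m y) in *. set (Z := vnorm m (mulv n M w)) in *.
  destruct (Req_dec W 0) as [W0|W0]; [rewrite W0; nra|].
  assert (Z ^ 2 <= (mu * W) ^ 2) by (apply pow_incr; lra).
  assert (W ^ 2 <= (mu * Y) ^ 2) by nra.
  apply Rsqr_incr_0_var; unfold Rsqr; nra.
Qed.

Lemma spectral_norm_sq_le m n M s L : is_spectral_norm m n M s -> 0 <= L ->
  (forall x, dot n x x = 1 -> dot m (mulv n M x) (mulv n M x) <= L) ->
  s ^ 2 <= L.
Proof.
  intros HS HL Hunit.
  pose proof (spectral_norm_nonneg _ _ _ _ HS) as Hs.
  assert (Hsl : s <= sqrt L).
  { destruct HS as [_ Hlub]. apply Hlub. intros r [x [Hx Hr]].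
    pose proof (vnorm_nonneg n x).
    set (k := / vnorm n x).
    assert (Hk : 0 < k) by (apply Rinv_0_lt_compat; lra).
    set (x' := fun j => k * x j).
    assert (Hx' : dot n x' x' = 1).
    { rewrite <- vnorm_sq. unfold x'. rewrite vnorm_scal, Rabs_pos_eq by lra.
      unfold k. field. auto. }
    assert (E : vnorm m (mulv n M x') = r).
    { unfold x'. rewrite mulv_scal, vnorm_scal, Rabs_pos_eq, Hr by lra. unfold k, Rdiv. ring. }
    rewrite <- E. apply sqrt_le_1_alt, Hunit, Hx'. }
  rewrite <- (pow2_sqrt L) by lra. apply pow_incr. lra.
Qed.

Lemma principal_angle_bound m n1 n2 M1 M2 th : is_principal_angle m n1 n2 M1 M2 th ->
  forall u1 u2, vnorm m (mulv n1 M1 u1) <> 0 -> vnorm m (mulv n2 M2 u2) <> 0 ->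
  dot m (mulv n1 M1 u1) (mulv n2 M2 u2)
  <= cos th * (vnorm m (mulv n1 M1 u1) * vnorm m (mulv n2 M2 u2)).
Proof.
  intros [_ [Hub _]] u1 u2 h1 h2.
  set (p1 := mulv n1 M1 u1) in *. set (p2 := mulv n2 M2 u2) in *.
  assert (r : dot m p1 p2 / (vnorm m p1 * vnorm m p2) <= cos th)
    by (apply Hub; exists u1, u2; auto).
  pose proof (vnorm_nonneg m p1). pose proof (vnorm_nonneg m p2).
  assert (0 < vnorm m p1 * vnorm m p2) by (apply Rmult_lt_0_compat; lra).
  apply Rmult_le_compat_r with (r := vnorm m p1 * vnorm m p2) in r; [|lra].
  replace (dot m p1 p2 / (vnorm m p1 * vnorm m p2) * (vnorm m p1 * vnorm m p2))
    with (dot m p1 p2) in r by (field; lra).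
  exact r.
Qed.

Lemma principal_angle_abs_bound m n1 n2 M1 M2 th : is_principal_angle m n1 n2 M1 M2 th ->
  forall u1 u2, vnorm m (mulv n1 M1 u1) <> 0 -> vnorm m (mulv n2 M2 u2) <> 0 ->
  Rabs (dot m (mulv n1 M1 u1) (mulv n2 M2 u2))
  <= cos th * (vnorm m (mulv n1 M1 u1) * vnorm m (mulv n2 M2 u2)).
Proof.
  intros HA u1 u2 h1 h2.
  pose proof (principal_angle_bound _ _ _ _ _ _ HA u1 u2 h1 h2) as Hpos.
  pose proof (principal_angle_bound _ _ _ _ _ _ HA (fun j => -1 * u1 j) u2) as Hneg.
  rewrite mulv_scal, vnorm_scal in Hneg.
  replace (Rabs (-1)) with 1 in Hneg by (rewrite Rabs_left; lra).
  replace (dot m (fun i => -1 * mulv n1 M1 u1 i) (mulv n2 M2 u2))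
    with (-1 * dot m (mulv n1 M1 u1) (mulv n2 M2 u2)) in Hneg.
  - apply Rabs_le. rewrite Rmult_1_l in Hneg. specialize (Hneg ltac:(lra) h2). lra.
  - unfold dot. rewrite <- rsum_scal. apply rsum_ext; intros; ring.
Qed.

Lemma principal_angle_cos_range m n1 n2 M1 M2 th : is_principal_angle m n1 n2 M1 M2 th ->
  0 <= cos th <= 1.
Proof.
  intros [h _]. split; [apply cos_ge_0; pose proof PI_RGT_0; lra|apply COS_bound].
Qed.

Definition larger_root (T D : R) : R := / 2 * (sqrt (T ^ 2 - 4 * D) + T).

Section LargerRoot.
Variables T D : R.
Hypothesis discr_nonneg : 0 <= T ^ 2 - 4 * D.

Let S := sqrt (T ^ 2 - 4 * D).

Let S_sq : S * S = T ^ 2 - 4 * D.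
Proof. apply sqrt_sqrt, discr_nonneg. Qed.

Lemma larger_root_root : larger_root T D ^ 2 - T * larger_root T D + D = 0.
Proof. unfold larger_root. fold S. nra. Qed.

Lemma le_larger_root z : z ^ 2 - T * z + D <= 0 -> z <= larger_root T D.
Proof.
  intros Hz. pose proof (sqrt_pos (T ^ 2 - 4 * D)) as HS. fold S in HS.
  replace (z ^ 2 - T * z + D) with ((z - (S + T) / 2) * (z - (T - S) / 2)) in Hz by nra.
  unfold larger_root. fold S.
  destruct (Rle_dec z ((S + T) / 2)); [lra|nra].
Qed.

End LargerRoot.

Lemma larger_root_det0 T : 0 <= T -> larger_root T 0 = T.
Proof.
  intros HT. unfold larger_root.
  replace (T ^ 2 - 4 * 0) with (T * T) by ring. rewrite sqrt_square by lra. field.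
Qed.

Lemma binary_form_nonneg A B C u v : 0 <= A -> 0 <= C -> B ^ 2 <= A * C ->
  0 <= A * u ^ 2 + 2 * B * u * v + C * v ^ 2.
Proof.
  intros HA HC HB.
  destruct (Req_dec A 0) as [A0|A0].
  - subst A. assert (B = 0) by nra. subst B. nra.
  - assert (0 <= A * (A * u ^ 2 + 2 * B * u * v + C * v ^ 2)); [|nra].
    replace (A * (A * u ^ 2 + 2 * B * u * v + C * v ^ 2))
      with ((A * u + B * v) ^ 2 + (A * C - B ^ 2) * v ^ 2) by ring.
    assert (0 <= (A * C - B ^ 2) * v ^ 2) by (apply Rmult_le_pos; [lra|apply pow2_ge_0]).
    pose proof (pow2_ge_0 (A * u + B * v)). lra.
Qed.

(* [Lambda^2] is the larger root of [z^2 - lam_trace z + lam_det], the larger eigenvalue of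
   a 2x2 matrix with that trace and determinant. *)
Definition lam_trace (mu nu a b : R) : R := mu ^ 2 + nu ^ 2 + 2 * mu * nu * a * b.
Definition lam_det (mu nu a b : R) : R := mu ^ 2 * nu ^ 2 * (1 - a ^ 2) * (1 - b ^ 2).

Lemma Lambda2_larger_root mu nu theta eta :
  Lambda2 mu nu theta eta
  = larger_root (lam_trace mu nu (cos theta) (cos eta)) (lam_det mu nu (cos theta) (cos eta)).
Proof.
  unfold Lambda2, larger_root, lam_trace, lam_det.
  pose proof (sin2_cos2 theta) as Ht. pose proof (sin2_cos2 eta) as He. unfold Rsqr in *.
  replace (sin theta ^ 2) with (1 - cos theta ^ 2) by nra.
  replace (sin eta ^ 2) with (1 - cos eta ^ 2) by nra.
  do 4 f_equal. ring.
Qed.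

Section LambdaBound.
Variables mu nu a b : R.
Hypotheses (mu_ge0 : 0 <= mu) (nu_ge0 : 0 <= nu) (a_range : 0 <= a <= 1) (b_range : 0 <= b <= 1).

Let lam := larger_root (lam_trace mu nu a b) (lam_det mu nu a b).

Lemma lam_discr_nonneg : 0 <= lam_trace mu nu a b ^ 2 - 4 * lam_det mu nu a b.
Proof.
  unfold lam_trace, lam_det.
  assert (0 <= mu * nu) by nra.
  assert (H1 : 2 * mu * nu * (1 + a * b) <= mu ^ 2 + nu ^ 2 + 2 * mu * nu * a * b)
    by (pose proof (pow2_ge_0 (mu - nu)); nra).
  assert (H2 : (1 - a ^ 2) * (1 - b ^ 2) <= (1 + a * b) ^ 2)
    by (pose proof (pow2_ge_0 (a + b)); nra).
  assert ((2 * mu * nu * (1 + a * b)) ^ 2 <= (mu ^ 2 + nu ^ 2 + 2 * mu * nu * a * b) ^ 2)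
    by (apply pow_incr; split; [apply Rmult_le_pos|]; nra).
  nra.
Qed.

Lemma sq_le_lam_l : mu ^ 2 <= lam.
Proof.
  apply le_larger_root; [apply lam_discr_nonneg|]. unfold lam_trace, lam_det.
  assert (0 <= mu * nu * a * b) by (repeat apply Rmult_le_pos; lra).
  assert (0 <= a ^ 2 + b ^ 2 - a ^ 2 * b ^ 2)
    by (assert (0 <= b ^ 2 * (1 - a ^ 2)) by (apply Rmult_le_pos; nra); nra).
  assert (0 <= mu ^ 2 * (mu * nu * a * b)) by (apply Rmult_le_pos; [apply pow2_ge_0|lra]).
  assert (0 <= mu ^ 2 * nu ^ 2 * (a ^ 2 + b ^ 2 - a ^ 2 * b ^ 2))
    by (apply Rmult_le_pos; [apply Rmult_le_pos; apply pow2_ge_0|lra]).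
  nra.
Qed.

Lemma sq_le_lam_r : nu ^ 2 <= lam.
Proof.
  apply le_larger_root; [apply lam_discr_nonneg|]. unfold lam_trace, lam_det.
  assert (0 <= mu * nu * a * b) by (repeat apply Rmult_le_pos; lra).
  assert (0 <= a ^ 2 + b ^ 2 - a ^ 2 * b ^ 2)
    by (assert (0 <= b ^ 2 * (1 - a ^ 2)) by (apply Rmult_le_pos; nra); nra).
  assert (0 <= nu ^ 2 * (mu * nu * a * b)) by (apply Rmult_le_pos; [apply pow2_ge_0|lra]).
  assert (0 <= mu ^ 2 * nu ^ 2 * (a ^ 2 + b ^ 2 - a ^ 2 * b ^ 2))
    by (apply Rmult_le_pos; [apply Rmult_le_pos; apply pow2_ge_0|lra]).
  nra.
Qed.

Lemma lam_nonneg : 0 <= lam.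
Proof. pose proof sq_le_lam_l. pose proof (pow2_ge_0 mu). lra. Qed.

(* The left side exceeds the (vanishing) value at [gm = b] by
   [2 a mu nu (b - gm) lam + mu^2 nu^2 (1 - a^2) (b^2 - gm^2)]. *)
Lemma lam_char_poly_nonneg gm : - b <= gm <= b ->
  0 <= lam ^ 2 - lam_trace mu nu a gm * lam + lam_det mu nu a gm.
Proof.
  intros Hgm.
  pose proof (larger_root_root _ _ lam_discr_nonneg) as Hroot. fold lam in Hroot.
  pose proof lam_nonneg.
  assert (0 <= 2 * a * mu * nu * (b - gm) * lam).
  { apply Rmult_le_pos; [repeat apply Rmult_le_pos|]; lra. }
  assert (0 <= mu ^ 2 * nu ^ 2 * (1 - a ^ 2) * (b ^ 2 - gm ^ 2))
    by (repeat apply Rmult_le_pos; nra).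
  unfold lam_trace, lam_det in *. nra.
Qed.

Lemma form_le_lam_interior u v gm : - b <= gm <= b -> gm ^ 2 < 1 ->
  u ^ 2 + v ^ 2 - 2 * gm * u * v <= 1 - gm ^ 2 ->
  mu ^ 2 * u ^ 2 + nu ^ 2 * v ^ 2 + 2 * a * mu * nu * u * v <= lam.
Proof.
  intros Hgm Hlt HG1.
  set (G := u ^ 2 + v ^ 2 - 2 * gm * u * v) in *.
  set (F := mu ^ 2 * u ^ 2 + nu ^ 2 * v ^ 2 + 2 * a * mu * nu * u * v).
  pose proof (lam_char_poly_nonneg gm Hgm) as Hchar.
  pose proof sq_le_lam_l. pose proof sq_le_lam_r. pose proof lam_nonneg.
  (* the determinant of the binary form [lam G - (1 - gm^2) F] is [(1 - gm^2) Hchar] *)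
  assert (Hform : 0 <= lam * G - (1 - gm ^ 2) * F).
  { replace (lam * G - (1 - gm ^ 2) * F)
      with ((lam - (1 - gm ^ 2) * mu ^ 2) * u ^ 2
            + 2 * (- (gm * lam + (1 - gm ^ 2) * a * mu * nu)) * u * v
            + (lam - (1 - gm ^ 2) * nu ^ 2) * v ^ 2) by (unfold G, F; ring).
    apply binary_form_nonneg; [nra|nra|].
    assert (0 <= (1 - gm ^ 2) * (lam ^ 2 - lam_trace mu nu a gm * lam + lam_det mu nu a gm))
      by (apply Rmult_le_pos; lra).
    unfold lam_trace, lam_det in *. nra. }
  assert (lam * G <= lam * (1 - gm ^ 2)) by (apply Rmult_le_compat_l; lra).
  nra.
Qed.

Lemma form_le_lam_boundary u gm : - b <= gm <= b -> gm ^ 2 = 1 -> u ^ 2 <= 1 ->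
  mu ^ 2 * u ^ 2 + nu ^ 2 * (gm * u) ^ 2 + 2 * a * mu * nu * u * (gm * u) <= lam.
Proof.
  intros Hgm Hgm1 Hu1.
  assert (Hb1 : b = 1) by nra.
  assert (0 <= mu * nu * a) by (repeat apply Rmult_le_pos; lra).
  assert (HT : 0 <= lam_trace mu nu a b) by (unfold lam_trace; nra).
  assert (Hlam : lam = lam_trace mu nu a b).
  { unfold lam. replace (lam_det mu nu a b) with 0 by (unfold lam_det; rewrite Hb1; ring).
    apply larger_root_det0, HT. }
  replace (mu ^ 2 * u ^ 2 + nu ^ 2 * (gm * u) ^ 2 + 2 * a * mu * nu * u * (gm * u))
    with (u ^ 2 * lam_trace mu nu a gm)
    by (unfold lam_trace; replace ((gm * u) ^ 2) with (gm ^ 2 * u ^ 2) by ring;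
        rewrite Hgm1; ring).
  assert (lam_trace mu nu a gm <= lam_trace mu nu a b) by (unfold lam_trace; nra).
  assert (u ^ 2 * lam_trace mu nu a gm <= u ^ 2 * lam_trace mu nu a b)
    by (apply Rmult_le_compat_l; [apply pow2_ge_0|lra]).
  nra.
Qed.

(* Testing the ellipse condition with [P = u - gm v, Q = v - gm u] bounds
   [u^2 + v^2 - 2 gm u v] by [1 - gm^2]. *)
Lemma form_le_lam u v gm : - b <= gm <= b ->
  (forall P Q, (P * u + Q * v) ^ 2 <= P ^ 2 + Q ^ 2 + 2 * P * Q * gm) ->
  mu ^ 2 * u ^ 2 + nu ^ 2 * v ^ 2 + 2 * a * mu * nu * u * v <= lam.
Proof.
  intros Hgm Hell.
  set (G := u ^ 2 + v ^ 2 - 2 * gm * u * v).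
  assert (Hu1 : u ^ 2 <= 1) by (specialize (Hell 1 0); nra).
  assert (HG : G ^ 2 <= (1 - gm ^ 2) * G).
  { specialize (Hell (u - gm * v) (v - gm * u)).
    replace ((u - gm * v) * u + (v - gm * u) * v) with G in Hell by (unfold G; ring).
    replace ((u - gm * v) ^ 2 + (v - gm * u) ^ 2 + 2 * (u - gm * v) * (v - gm * u) * gm)
      with ((1 - gm ^ 2) * G) in Hell by (unfold G; ring).
    exact Hell. }
  assert (HG_sos : G = (u - gm * v) ^ 2 + (1 - gm ^ 2) * v ^ 2) by (unfold G; ring).
  assert (Hgm2 : gm ^ 2 <= 1) by nra.
  destruct (Rlt_dec (gm ^ 2) 1) as [Hlt|Hge].
  - apply (form_le_lam_interior u v gm Hgm Hlt).
    assert (0 <= G).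
    { rewrite HG_sos. pose proof (pow2_ge_0 (u - gm * v)).
      assert (0 <= (1 - gm ^ 2) * v ^ 2) by (apply Rmult_le_pos; [lra|apply pow2_ge_0]). lra. }
    fold G. destruct (Req_dec G 0); nra.
  - assert (Hgm1 : gm ^ 2 = 1) by lra.
    assert (Hv : v = gm * u) by (assert (G = 0) by nra; nra).
    rewrite Hv. apply form_le_lam_boundary; assumption.
Qed.

End LambdaBound.

Lemma dot_normal_image m n M x :
  dot n (mulv m (trmat M) (mulv n M x)) x = vnorm m (mulv n M x) ^ 2.
Proof. rewrite dot_trmat, vnorm_sq. reflexivity. Qed.

Lemma vnorm_image_sq_le m n M x : dot n x x = 1 ->
  vnorm m (mulv n M x) ^ 2 <= vnorm n (mulv m (trmat M) (mulv n M x)).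
Proof.
  intros Hx.
  pose proof (Cauchy_Schwarz n (mulv m (trmat M) (mulv n M x)) x) as C.
  rewrite dot_normal_image, Hx, Rmult_1_r, <- vnorm_sq in C.
  pose proof (vnorm_nonneg n (mulv m (trmat M) (mulv n M x))).
  pose proof (pow2_ge_0 (vnorm m (mulv n M x))).
  apply Rsqr_incr_0_var; unfold Rsqr; nra.
Qed.

Lemma gram_ellipse n (r1 r2 x : vec) : dot n x x = 1 -> 0 < vnorm n r1 -> 0 < vnorm n r2 ->
  forall P Q, (P * (dot n r1 x / vnorm n r1) + Q * (dot n r2 x / vnorm n r2)) ^ 2
              <= P ^ 2 + Q ^ 2 + 2 * P * Q * (dot n r1 r2 / (vnorm n r1 * vnorm n r2)).
Proof.
  intros Hx H1 H2 P Q.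
  set (P' := P / vnorm n r1). set (Q' := Q / vnorm n r2).
  pose proof (Cauchy_Schwarz n (fun j => P' * r1 j + Q' * r2 j) x) as C.
  rewrite Hx, Rmult_1_r, dot_lin_l, dot_lin_sq, <- !vnorm_sq in C.
  replace (P * (dot n r1 x / vnorm n r1) + Q * (dot n r2 x / vnorm n r2))
    with (P' * dot n r1 x + Q' * dot n r2 x) by (unfold P', Q'; field; lra).
  replace (P ^ 2 + Q ^ 2 + 2 * P * Q * (dot n r1 r2 / (vnorm n r1 * vnorm n r2)))
    with (P' ^ 2 * vnorm n r1 ^ 2 + Q' ^ 2 * vnorm n r2 ^ 2 + 2 * P' * Q' * dot n r1 r2)
    by (unfold P', Q'; field; lra).
  exact C.
Qed.

Lemma form_le_mono a x1 x2 y1 y2 : 0 <= a -> 0 <= x1 <= y1 -> 0 <= x2 <= y2 ->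
  x1 ^ 2 + x2 ^ 2 + 2 * a * x1 * x2 <= y1 ^ 2 + y2 ^ 2 + 2 * a * y1 * y2.
Proof.
  intros Ha H1 H2.
  assert (x1 ^ 2 <= y1 ^ 2) by (apply pow_incr; lra).
  assert (x2 ^ 2 <= y2 ^ 2) by (apply pow_incr; lra).
  assert (x1 * x2 <= y1 * y2) by (apply Rmult_le_compat; lra).
  assert (a * (x1 * x2) <= a * (y1 * y2)) by (apply Rmult_le_compat_l; lra).
  lra.
Qed.

Section SumBound.
Variables (m n : nat) (M1 M2 : mat) (mu nu theta eta : R).
Hypotheses (HS1 : is_spectral_norm m n M1 mu) (HS2 : is_spectral_norm m n M2 nu)
  (HA : is_principal_angle m n n M1 M2 theta)
  (HB : is_principal_angle n m m (trmat M1) (trmat M2) eta).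

Let a := cos theta.
Let b := cos eta.
Let lam := larger_root (lam_trace mu nu a b) (lam_det mu nu a b).

Lemma column_images_bound x : dot n x x = 1 ->
  let c1 := vnorm m (mulv n M1 x) in let c2 := vnorm m (mulv n M2 x) in
  0 < c1 -> 0 < c2 -> c1 ^ 2 + c2 ^ 2 + 2 * a * c1 * c2 <= lam.
Proof.
  intros Hx c1 c2 Hc1 Hc2.
  pose proof (spectral_norm_nonneg _ _ _ _ HS1) as Hmu.
  pose proof (spectral_norm_nonneg _ _ _ _ HS2) as Hnu.
  pose proof (principal_angle_cos_range _ _ _ _ _ _ HA) as Ha. fold a in Ha.
  pose proof (principal_angle_cos_range _ _ _ _ _ _ HB) as Hb. fold b in Hb.
  set (p1 := mulv n M1 x) in *. set (p2 := mulv n M2 x) in *.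
  set (r1 := mulv m (trmat M1) p1). set (r2 := mulv m (trmat M2) p2).
  set (e1 := vnorm n r1). set (e2 := vnorm n r2).
  assert (Be1 : e1 <= mu * c1) by apply (spectral_norm_bound_trmat _ _ _ _ HS1).
  assert (Be2 : e2 <= nu * c2) by apply (spectral_norm_bound_trmat _ _ _ _ HS2).
  assert (Ce1 : c1 ^ 2 <= e1) by apply (vnorm_image_sq_le _ _ _ _ Hx).
  assert (Ce2 : c2 ^ 2 <= e2) by apply (vnorm_image_sq_le _ _ _ _ Hx).
  assert (He1 : 0 < e1) by (pose proof (pow_lt _ 2 Hc1); lra).
  assert (He2 : 0 < e2) by (pose proof (pow_lt _ 2 Hc2); lra).
  set (gm := dot n r1 r2 / (e1 * e2)).
  assert (Hgm : - b <= gm <= b).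
  { pose proof (principal_angle_abs_bound _ _ _ _ _ _ HB p1 p2 ltac:(fold r1 e1; lra)
                  ltac:(fold r2 e2; lra)) as K.
    fold r1 r2 e1 e2 b in K.
    assert (0 < e1 * e2) by (apply Rmult_lt_0_compat; lra).
    pose proof (Rle_abs (dot n r1 r2)). pose proof (Rle_abs (- dot n r1 r2)).
    rewrite Rabs_Ropp in *.
    unfold gm. split; apply Rmult_le_reg_r with (e1 * e2); try lra;
      unfold Rdiv; rewrite Rmult_assoc, Rinv_l; lra. }
  set (u := c1 ^ 2 / e1). set (v := c2 ^ 2 / e2).
  assert (Hform : mu ^ 2 * u ^ 2 + nu ^ 2 * v ^ 2 + 2 * a * mu * nu * u * v <= lam).
  { apply (form_le_lam mu nu a b Hmu Hnu Ha Hb u v gm Hgm).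
    pose proof (gram_ellipse n r1 r2 x Hx He1 He2) as G.
    assert (Dr1 : dot n r1 x = c1 ^ 2) by apply dot_normal_image.
    assert (Dr2 : dot n r2 x = c2 ^ 2) by apply dot_normal_image.
    rewrite Dr1, Dr2 in G. exact G. }
  assert (Hu : c1 <= mu * u).
  { unfold u. apply Rmult_le_reg_r with e1; [lra|].
    replace (mu * (c1 ^ 2 / e1) * e1) with (mu * c1 * c1) by (field; lra). nra. }
  assert (Hv : c2 <= nu * v).
  { unfold v. apply Rmult_le_reg_r with e2; [lra|].
    replace (nu * (c2 ^ 2 / e2) * e2) with (nu * c2 * c2) by (field; lra). nra. }
  pose proof (form_le_mono a c1 c2 (mu * u) (nu * v) (proj1 Ha) ltac:(lra) ltac:(lra)).
  nra.
Qed.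

Lemma addmat_unit_image_le x : dot n x x = 1 ->
  dot m (mulv n (addmat M1 M2) x) (mulv n (addmat M1 M2) x) <= lam.
Proof.
  intros Hx.
  pose proof (spectral_norm_nonneg _ _ _ _ HS1) as Hmu.
  pose proof (spectral_norm_nonneg _ _ _ _ HS2) as Hnu.
  pose proof (principal_angle_cos_range _ _ _ _ _ _ HA) as Ha. fold a in Ha.
  pose proof (principal_angle_cos_range _ _ _ _ _ _ HB) as Hb. fold b in Hb.
  pose proof (sq_le_lam_l mu nu a b Hmu Hnu Ha Hb) as Hlam1.
  pose proof (sq_le_lam_r mu nu a b Hmu Hnu Ha Hb) as Hlam2. fold lam in Hlam1, Hlam2.
  set (p1 := mulv n M1 x). set (p2 := mulv n M2 x).
  set (c1 := vnorm m p1). set (c2 := vnorm m p2).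
  rewrite mulv_addmat, dot_lin_sq, <- !vnorm_sq. fold p1 p2 c1 c2.
  assert (Hxn : vnorm n x = 1) by (unfold vnorm; rewrite Hx; apply sqrt_1).
  assert (Bc1 : c1 <= mu)
    by (pose proof (spectral_norm_bound _ _ _ _ HS1 x) as B; fold p1 c1 in B;
        rewrite Hxn in B; lra).
  assert (Bc2 : c2 <= nu)
    by (pose proof (spectral_norm_bound _ _ _ _ HS2 x) as B; fold p2 c2 in B;
        rewrite Hxn in B; lra).
  pose proof (vnorm_nonneg m p1) as Pc1. pose proof (vnorm_nonneg m p2) as Pc2.
  fold c1 c2 in Pc1, Pc2.
  pose proof (Cauchy_Schwarz m p1 p2) as CS. rewrite <- !vnorm_sq in CS. fold c1 c2 in CS.
  destruct (Req_dec c1 0) as [z1|z1].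
  { assert (dot m p1 p2 = 0) by (rewrite z1 in CS; nra).
    assert (c2 ^ 2 <= nu ^ 2) by (apply pow_incr; lra). rewrite z1. nra. }
  destruct (Req_dec c2 0) as [z2|z2].
  { assert (dot m p1 p2 = 0) by (rewrite z2 in CS; nra).
    assert (c1 ^ 2 <= mu ^ 2) by (apply pow_incr; lra). rewrite z2. nra. }
  assert (dot m p1 p2 <= a * (c1 * c2)) by (apply (principal_angle_bound _ _ _ _ _ _ HA); auto).
  pose proof (column_images_bound x Hx ltac:(fold p1 c1; lra) ltac:(fold p2 c2; lra)) as K.
  cbv zeta in K. fold p1 p2 c1 c2 in K. nra.
Qed.

End SumBound.

Theorem lemma2 (m n : nat) (M1 M2 : mat) (mu nu theta eta s : R) :
  is_spectral_norm m n M1 mu ->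
  is_spectral_norm m n M2 nu ->
  is_principal_angle m n n M1 M2 theta ->
  is_principal_angle n m m (trmat M1) (trmat M2) eta ->
  is_spectral_norm m n (addmat M1 M2) s ->
  s ^ 2 <= Lambda2 mu nu theta eta.
Proof.
  intros HS1 HS2 HA HB HS.
  rewrite Lambda2_larger_root.
  apply (spectral_norm_sq_le _ _ _ _ _ HS).
  - apply lam_nonneg.
    + exact (spectral_norm_nonneg _ _ _ _ HS1).
    + exact (spectral_norm_nonneg _ _ _ _ HS2).
    + exact (principal_angle_cos_range _ _ _ _ _ _ HA).
    + exact (principal_angle_cos_range _ _ _ _ _ _ HB).
  - exact (addmat_unit_image_le _ _ _ _ _ _ _ _ HS1 HS2 HA HB).
Qed.
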